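(* Let $F:\mathcal{G}_{\Sigma,\Delta,\pi}\to\mathcal{G}_{\Sigma,\Delta,\pi}$ be a causal graph dynamics. For every renaming $R$, $F$ admits at least one conjugate renaming $R'$, i.e. $F\circ R=R'\circ F$. Moreover, for any local rule $f$ of $F$ and any renaming $R$, $\mathrm{Conj}_f(R)\subseteq\mathrm{Conj}_F(R)$.
   Context: Fix an uncountably infinite set $\mathcal{V}$. For sets $\Sigma,\Delta$ and finite $\pi$, a graph $G$: countable $V(G)\subset\mathcal{V}$, a set $E(G)$ of pairwise disjoint two-element subsets of $V(G)\times\pi$ (write $u\!:\!i$), partial labelings $\sigma(G):V(G)\rightharpoonup\Sigma$, $\delta(G):E(G)\rightharpoonup\Delta$; $\mathcal{G}_{\Sigma,\Delta,\pi}$ the set of graphs. A renaming is a bijection $R:\mathcal{V}\to\mathcal{V}$, acting on edges by $R(\{u\!:\!i,v\!:\!j\})=\{R(u)\!:\!i,R(v)\!:\!j\}$, on graphs by $V(R(G))=R(V(G))$, $E(R(G))=R(E(G))$, $\sigma(R(G))=\sigma(G)\circ R^{-1}$, $\delta(R(G))=\delta(G)\circ R^{-1}$, and on pointed graphs by $R(G,v)=(R(G),R(v))$. Consistency: edge sets jointly pairwise disjoint, labelings agree on common domains; union/intersection componentwise; $\varnothing$ empty graph. Disk $G^r_c=(H,c)$: $V(H)=B_G(c,r+1)$ (shortest-path ball), $E(H)$ edges of $G$ with an endpoint in $B_G(c,r)$, $\sigma(H)=\sigma(G)|_{B_G(c,r)}$, $\delta(H)=\delta(G)|_{E(H)}$;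 $\mathcal{D}^r$ set of radius-$r$ disks. A local rule of radius $r$ is $f:\mathcal{D}^r\to\mathcal{G}$ with (1) for each renaming $R$ a renaming $R'$ with $f\circ R=R'\circ f$; (2) families of disks with empty intersection have images with empty intersection; (3) $|V(f(D))|$ uniformly bounded; (4) $f(G^r_u),f(G^r_v)$ consistent for all $G$ and $u,v\in V(G)$. A CGD is $F(G)=\bigcup_{v\in V(G)}f(G^r_v)$ for some local rule $f$ (a local rule of $F$). For a map $X$ (either $F$ or $f$) and renaming $R$, $\mathrm{Conj}_X(R)$ is the set of renamings $R'$ with $X\circ R=R'\circ X$. *)

From mathcomp Require Import all_boot.
From mathcomp Require Import boolp classical_sets cardinality.
From Stdlib Require List.
Set Implicit Arguments. Unset Strict Implicit. Unset Printing Implicit Defensive.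
Local Open Scope classical_set_scope.

Section CGD.
Context {V Sigma Delta : Type} {Pi : finType}.

Definition port := (V * Pi)%type.
(* an edge is a subset of V x Pi (well-formedness asks for exactly 2 elements) *)
Definition edge := set port.

(* A (raw) graph.  Partial labelings are represented by their graphs
   (sets of pairs); functionality and domains are imposed by [wf_graph]. *)
Record graph := mkGraph {
  V_ : set V;
  E_ : set edge;
  sig_ : set (V * Sigma);
  del_ : set (edge * Delta) }.

Definition pgraph := (graph * V)%type.

Definition wf_graph (G : graph) : Prop :=
  countable (V_ G) /\
  (forall e, E_ G e -> exists a b : port,
       a <> b /\ e = [set a] `|` [set b] /\ V_ G a.1 /\ V_ G b.1) /\
  (forall e e', E_ G e -> E_ G e' -> e <> e' -> e `&` e' = set0) /\
  (forall v s, sig_ G (v, s) -> V_ G v) /\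
  (forall v s s', sig_ G (v, s) -> sig_ G (v, s') -> s = s') /\
  (forall e d, del_ G (e, d) -> E_ G e) /\
  (forall e d d', del_ G (e, d) -> del_ G (e, d') -> d = d').

Definition empty_graph : graph := mkGraph set0 set0 set0 set0.

Definition renaming (R : V -> V) : Prop := bijective R.
Definition rename_port (R : V -> V) (p : port) : port := (R p.1, p.2).
Definition rename_edge (R : V -> V) (e : edge) : edge := rename_port R @` e.
Definition rename (R : V -> V) (G : graph) : graph :=
  mkGraph (R @` V_ G) (rename_edge R @` E_ G)
          ((fun x => (R x.1, x.2)) @` sig_ G)
          ((fun x => (rename_edge R x.1, x.2)) @` del_ G).
Definition prename (R : V -> V) (D : pgraph) : pgraph := (rename R D.1, R D.2).

Definition consistent (G H : graph) : Prop :=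
  (forall e e', (E_ G e \/ E_ H e) -> (E_ G e' \/ E_ H e') -> e <> e' ->
      e `&` e' = set0) /\
  (forall v s s', sig_ G (v, s) -> sig_ H (v, s') -> s = s') /\
  (forall e d d', del_ G (e, d) -> del_ H (e, d') -> d = d').

Definition bigunion {I : Type} (A : set I) (g : I -> graph) : graph :=
  mkGraph (\bigcup_(i in A) V_ (g i)) (\bigcup_(i in A) E_ (g i))
          (\bigcup_(i in A) sig_ (g i)) (\bigcup_(i in A) del_ (g i)).
Definition bigint {I : Type} (A : set I) (g : I -> graph) : graph :=
  mkGraph (\bigcap_(i in A) V_ (g i)) (\bigcap_(i in A) E_ (g i))
          (\bigcap_(i in A) sig_ (g i)) (\bigcap_(i in A) del_ (g i)).

Definition adj (G : graph) (u v : V) : Prop :=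
  exists e, E_ G e /\ exists i j : Pi, e (u, i) /\ e (v, j) /\ (u, i) <> (v, j).

Fixpoint ball (G : graph) (c : V) (n : nat) : set V :=
  match n with
  | 0 => [set c] `&` V_ G
  | n'.+1 => ball G c n' `|` [set v | exists u, ball G c n' u /\ adj G u v]
  end.

Definition disk_edges (G : graph) (r : nat) (c : V) : set edge :=
  [set e | E_ G e /\ exists p : port, e p /\ ball G c r p.1].
Definition disk (G : graph) (r : nat) (c : V) : pgraph :=
  (mkGraph (ball G c r.+1) (disk_edges G r c)
           [set x | sig_ G x /\ ball G c r x.1]
           [set x | del_ G x /\ disk_edges G r c x.1 ], c).

Definition disks (r : nat) : set pgraph :=
  [set D | exists G c, wf_graph G /\ V_ G c /\ D = disk G r c].

Definition conj_rule (r : nat) (f : pgraph -> graph) (R R' : V -> V) : Prop :=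
  renaming R' /\ forall D, disks r D -> f (prename R D) = rename R' (f D).
Definition conj_dyn (F : graph -> graph) (R R' : V -> V) : Prop :=
  renaming R' /\ forall G, wf_graph G -> F (rename R G) = rename R' (F G).

Definition local_rule (r : nat) (f : pgraph -> graph) : Prop :=
  (forall D, disks r D -> wf_graph (f D)) /\
  (forall R, renaming R -> exists R', conj_rule r f R R') /\
  (forall S : set pgraph, S `<=` disks r ->
      bigint S (fun D => D.1) = empty_graph -> bigint S f = empty_graph) /\
  (exists b : nat, forall D, disks r D ->
      exists s : seq V, size s <= b /\ V_ (f D) `<=` [set x | Stdlib.Lists.List.In x s]) /\
  (forall G u v, wf_graph G -> V_ G u -> V_ G v ->
      consistent (f (disk G r u)) (f (disk G r v))).

Definition local_rule_of (r : nat) (f : pgraph -> graph) (F : graph -> graph) :=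
  local_rule r f /\
  forall G, wf_graph G -> F G = bigunion (V_ G) (fun v => f (disk G r v)).

Definition is_CGD (F : graph -> graph) : Prop :=
  exists r f, local_rule_of r f F.

End CGD.

(* Renaming a graph renames its disks: a bijection of vertices preserves adjacency,
   hence shortest-path balls, hence G^r_c is sent to (RG)^r_{Rc}.  Since F(G) is
   the union of the f(G^r_v), any R' conjugating f to R on disks then conjugates F,
   and a local rule always has such an R' by its first axiom. *)
From mathcomp Require Import all_boot.
From mathcomp Require Import boolp classical_sets cardinality.
Set Implicit Arguments. Unset Strict Implicit. Unset Printing Implicit Defensive.
Local Open Scope classical_set_scope.

Section Renaming.
Context {V Sigma Delta : Type} {Pi : finType}.
Notation graph := (@graph V Sigma Delta Pi).

Lemma graph_ext (G H : graph) :
  V_ G = V_ H -> E_ G = E_ H -> sig_ G = sig_ H -> del_ G = del_ H -> G = H.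
Proof. by case: G => ????; case: H => ???? /= -> -> -> ->. Qed.

Lemma rename_bigunion (I : Type) (A : set I) (g : I -> graph) (R : V -> V) :
  rename R (bigunion A g) = bigunion A (fun i => rename R (g i)).
Proof. by apply: graph_ext; rewrite /= image_bigcup. Qed.

Lemma bigunion_image (I J : Type) (A : set I) (h : I -> J) (g : J -> graph) :
  bigunion (h @` A) g = bigunion A (fun i => g (h i)).
Proof. by apply: graph_ext; rewrite /= bigcup_image. Qed.

Variable R : V -> V.
Hypothesis R_inj : injective R.

Lemma rename_port_inj : injective (@rename_port V Pi R).
Proof. by case=> a i [b j] [/R_inj -> ->]. Qed.

Lemma rename_edge_port (e : @edge V Pi) p :
  rename_edge R e (rename_port R p) = e p.
Proof. exact: image_inj rename_port_inj. Qed.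

Lemma rename_edge_inj : injective (@rename_edge V Pi R).
Proof.
by move=> e e' ee'; rewrite predeqE => p; rewrite -rename_edge_port ee' rename_edge_port.
Qed.

Lemma rename_edgeI (e e' : @edge V Pi) :
  rename_edge R e `&` rename_edge R e' = rename_edge R (e `&` e').
Proof.
rewrite predeqE => x; split; last by case=> p [ep e'p] <-; split; exists p.
by case=> -[p ep <-]; rewrite !rename_edge_port.
Qed.

Lemma adj_rename (G : graph) u v : adj (rename R G) (R u) (R v) <-> adj G u v.
Proof.
have mem e w i : rename_edge R e (R w, i) = e (w, i) := rename_edge_port e (w, i).
split.
- case=> _ [[e Ee <-]] [i [j]]; rewrite !mem => -[eu [ev uv]].
  exists e; split => //; exists i, j; do 2!split => //.
  by case=> uv' ij; apply: uv; rewrite uv' ij.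
- case=> e [Ee [i [j [eu [ev uv]]]]].
  exists (rename_edge R e); split; first by exists e.
  exists i, j; rewrite !mem; do 2!split => //.
  by case=> /R_inj uv' ij; apply: uv; rewrite uv' ij.
Qed.

Lemma wf_graph_rename (G : graph) : wf_graph G -> wf_graph (rename R G).
Proof.
case=> cV [hE [hD [hs [hs' [hd hd']]]]]; split.
  exact: sub_countable (card_image_le R _) cV.
split.
  move=> _ [e Ee <-]; have [a [b [ab [-> [Va Vb]]]]] := hE e Ee.
  exists (rename_port R a), (rename_port R b); split; first by move/rename_port_inj.
  rewrite /rename_edge image_setU !image_set1.
  by do 2!split => //; [exists a.1|exists b.1].
split.
  move=> _ _ [e Ee <-] [e' Ee' <-] ne.
  rewrite rename_edgeI hD //; first exact: image_set0.
  by move=> ee'; apply: ne; rewrite ee'.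
split; first by move=> v s [[u t] su /= [<- _]]; exists u; [exact: hs su|].
split.
  move=> _ s s' [[u t] su /= [<- <-]] [[u' t'] su' /= [/R_inj u'u <-]].
  by rewrite u'u in su'; exact: hs' su su'.
split; first by move=> e d [[e0 d0] de /= [<- _]]; exists e0; [exact: hd de|].
move=> _ d d' [[e t] de /= [<- <-]] [[e' t'] de' /= [/rename_edge_inj e'e <-]].
by rewrite e'e in de'; exact: hd' de de'.
Qed.

Variable Rinv : V -> V.
Hypothesis Rinv_K : cancel Rinv R.

Lemma ball_rename (G : graph) c n : ball (rename R G) (R c) n = R @` ball G c n.
Proof.
elim: n => [|n IH] /=; rewrite predeqE => w; split.
- by case=> /= -> [v Vv /R_inj vc]; exists c; rewrite -?vc.
- by case=> v [/= -> Vc] <-; split => //; exists c.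
- case=> [|[u [+ ad]]]; first by rewrite IH; case=> v Bv <-; exists v => //; left.
  rewrite IH => -[u' Bu' Ru']; rewrite -Ru' -(Rinv_K w) adj_rename in ad.
  by exists (Rinv w) => //; right; exists u'.
- case=> v [Bv|[u [Bu ad]]] <-; first by left; rewrite IH; exists v.
  by right; exists (R u); rewrite IH adj_rename; split => //; exists u.
Qed.

Lemma disk_edges_rename (G : graph) r c :
  disk_edges (rename R G) r (R c) = rename_edge R @` disk_edges G r c.
Proof.
rewrite predeqE => e; split.
- case=> [[e0 Ee0 <-]] [_ [[q e0q <-]]]; rewrite /= ball_rename (image_inj R_inj) => Bq.
  by exists e0 => //; split => //; exists q.
- case=> e0 [Ee0 [q [e0q Bq]]] <-; split; first by exists e0.
  by exists (rename_port R q); split; [exists q|rewrite ball_rename; exists q.1].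
Qed.

Lemma disk_rename (G : graph) r c :
  disk (rename R G) r (R c) = prename R (disk G r c).
Proof.
congr pair; apply: graph_ext => /=.
- exact: (ball_rename G c r.+1).
- exact: disk_edges_rename.
- rewrite predeqE => x; split.
  + case=> -[[v s] sv <-]; rewrite /= ball_rename (image_inj R_inj) => Bv.
    by exists (v, s).
  + by case=> -[v s] [sv Bv] <-; split; [exists (v, s)|rewrite /= ball_rename; exists v].
- rewrite predeqE => x; split.
  + case=> -[[e d] de <-]; rewrite /= disk_edges_rename (image_inj rename_edge_inj).
    by move=> De; exists (e, d).
  + case=> -[e d] [de De] <-; split; first by exists (e, d).
    by rewrite /= disk_edges_rename; exists e.
Qed.

End Renaming.

Lemma conj_rule_conj_dyn (V Sigma Delta : Type) (Pi : finType)
    (F : @graph V Sigma Delta Pi -> @graph V Sigma Delta Pi) r f :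
  local_rule_of r f F ->
  forall R R' : V -> V, renaming R -> conj_rule r f R R' -> conj_dyn F R R'.
Proof.
move=> [_ F_union] R R' [Rinv RinvK RK] [R'_ren f_conj]; split => // G wfG.
have R_inj : injective R := can_inj RinvK.
rewrite (F_union _ wfG) F_union; last exact: wf_graph_rename.
rewrite [V_ _]/= bigunion_image rename_bigunion.
have f_disk v : V_ G v -> f (disk (rename R G) r (R v)) = rename R' (f (disk G r v)).
  by move=> Vv; rewrite (disk_rename R_inj RK) f_conj //; exists G, v.
by apply: graph_ext; apply: eq_bigcupr => v /f_disk ->.
Qed.

Theorem proposition1p7 (V Sigma Delta : Type) (Pi : finType)
  (V_uncountable : ~ countable [set: V])
  (F : @graph V Sigma Delta Pi -> @graph V Sigma Delta Pi)
  (HF : is_CGD F) :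
  (forall R : V -> V, renaming R -> exists R' : V -> V, conj_dyn F R R') /\
  (forall (r : nat) (f : @pgraph V Sigma Delta Pi -> @graph V Sigma Delta Pi),
     local_rule_of r f F ->
     forall R R' : V -> V, renaming R -> conj_rule r f R R' -> conj_dyn F R R').
Proof.
split; last exact: conj_rule_conj_dyn.
move=> R R_ren; case: HF => r [f f_F].
have [_ [f_conj _]] := f_F.1.
have [R' R'_conj] := f_conj R R_ren.
by exists R'; exact: conj_rule_conj_dyn f_F R R' R_ren R'_conj.
Qed.
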